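(* Let $\mathcal C$ be a concept hierarchy and $r_1\in[0,1]$. Let $\mathcal A_2$ be the network defined below. Then for every $B\subseteq C_0$ presented at time 0 and every concept $c\in C$ with $c\notin supp_{r_1}(B)$, the neuron $rep(c)$ does not fire at time $level(c)$ in $\mathcal A_2$ (that is, $\mathcal A_2$ guarantees $r_1$-non-firing for $\mathcal C$).
   Context: Concept hierarchies: fix positive integers $\ell_{max},n,k$. A universal set $D$ of concepts is partitioned into disjoint sets $D_0,\dots,D_{\ell_{max}}$ with $|D_0|=n$; $level(c)=\ell$ for $c\in D_\ell$. A concept hierarchy $\mathcal C$ consists of $C\subseteq D$, with $C_\ell=C\cap D_\ell$, and for each $c\in C_\ell$ with $1\le\ell\le\ell_{max}$ a set $children(c)\subseteq C_{\ell-1}$, such that $|C_{\ell_{max}}|=k$, $|children(c)|=k$ for all such $c$, and $children(c)\cap children(c')=\emptyset$ for distinct $c,c'\in C_\ell$. For $B\subseteq D_0$ and $r\in[0,1]$: $B(0)=B\cap C_0$; for $1\le\ell\le\ell_{max}$, $B(\ell)=\{c\in C_\ell:|children(c)\cap B(\ell-1)|\ge rk\}$; $supp_r(B)=\bigcup_{\ell}B(\ell)$. Network $\mathcal A_2$: neurons partitioned into layers $N_0,\dots,N_{\ell_{max}}$; no failures. Each $c\in D_0$ has a neuron $rep(c)\in N_0$ and each $c\in C$ with $level(c)\ge1$ a neuron $rep(c)\in N_{level(c)}$, all distinct. For $v\in N_\ell$, $\ell\ge1$, and $u\in N_{\ell-1}$, the edge weight $w(u,v)$ is $1$ if $v=rep(c)$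 and $u=rep(c')$ for some child $c'$ of $c$, and $0$ otherwise. Threshold $\tau=r_1k$. Input $B\subseteq C_0$ presented at time 0: layer-0 neurons in $\{rep(b):b\in B\}$ fire at time 0, other layer-0 neurons do not, and no layer-0 neuron fires at any other time. Every neuron $v$ in a layer $\ell\ge1$ does not fire at time 0 and fires at time $t\ge1$ iff $\sum_{u\in N_{\ell-1}}w(u,v)x_u(t-1)\ge\tau$, where $x_u(s)\in\{0,1\}$ indicates whether $u$ fires at time $s$. *)

From HB Require Import structures.
From mathcomp Require Import all_boot all_order all_algebra.
Set Implicit Arguments. Unset Strict Implicit. Unset Printing Implicit Defensive.
Import Order.TTheory GRing.Theory Num.Theory.

(* Concepts form a finite type D; [level d] is the index of the block D_l of the
   partition D_0, ..., D_lmax containing d. *)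
Section Hierarchy.
Variables (D : finType) (level : D -> nat).

Definition Dlev (l : nat) : {set D} := [set d | level d == l].

Definition Clev (C : {set D}) (l : nat) : {set D} := C :&: Dlev l.

Definition is_concept_hierarchy (lmax n k : nat) (C : {set D})
    (children : D -> {set D}) : Prop :=
  [/\ (forall d, level d <= lmax),
      #|Dlev 0| = n,
      #|Clev C lmax| = k,
      (forall c, c \in C -> 1 <= level c <= lmax ->
         children c \subset Clev C (level c).-1 /\ #|children c| = k) &
      (forall l c c', 1 <= l <= lmax -> c \in Clev C l -> c' \in Clev C l ->
         c != c' -> [disjoint children c & children c'])].

Fixpoint Bset (R : numDomainType) (C : {set D}) (children : D -> {set D})
    (k : nat) (r : R) (B : {set D}) (l : nat) : {set D} :=
  match l with
  | 0 => B :&: Clev C 0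
  | l'.+1 => [set c in Clev C l'.+1 |
               (r * k%:R <= #|children c :&: Bset C children k r B l'|%:R)%R]
  end.

Definition supp (R : numDomainType) (lmax : nat) (C : {set D})
    (children : D -> {set D}) (k : nat) (r : R) (B : {set D}) : {set D} :=
  \bigcup_(l < lmax.+1) Bset C children k r B l.

End Hierarchy.

Section Network.
Variables (D N : finType) (level : D -> nat) (layer : N -> nat) (rep : D -> N)
          (C : {set D}) (children : D -> {set D}).

Definition represented (d : D) : bool := (level d == 0) || ((d \in C) && (0 < level d)).

Definition network_ok (lmax : nat) : Prop :=
  [/\ (forall v, layer v <= lmax),
      (forall d, represented d -> layer (rep d) = level d) &
      {in represented &, injective rep}].

Definition weight (u v : N) : nat :=
  if [exists c in C, (0 < level c) && (v == rep c) &&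
                     [exists c' in children c, u == rep c']] then 1 else 0.

Fixpoint fires (R : numDomainType) (tau : R) (B : {set D}) (t : nat) (v : N) : bool :=
  match t with
  | 0 => (layer v == 0) && [exists b in B, v == rep b]
  | t'.+1 => (0 < layer v) &&
      (tau <= (\sum_(u | layer u == (layer v).-1) weight u v * fires tau B t' u)%:R)%R
  end.

End Network.

From HB Require Import structures.
From mathcomp Require Import all_boot all_order all_algebra.
Import Order.TTheory GRing.Theory Num.Theory.

(* By induction on l: if rep(c) fires at time l then c is in B(l).  At level 0
   this is the input convention plus injectivity of rep.  At level l+1 the only
   nonzero weights into rep(c) come from the rep(c') with c' a child of c, and by
   induction those firing at time l have c' in B(l); so the input of rep(c) is at
   most |children(c) ∩ B(l)|, and reaching the threshold r k puts c in B(l+1). *)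

Lemma sum_mem_leq_card {T : finType} (P : pred T) (S : {set T}) :
  \sum_(u | P u) (u \in S) <= #|S|.
Proof.
rewrite -sum1_card big_mkcond [leqRHS]big_mkcond /=.
by apply: leq_sum => u _; case: (P u); case: (u \in S).
Qed.

Section NonFiring.

Variables (D N : finType) (level : D -> nat) (layer : N -> nat) (rep : D -> N)
          (C : {set D}) (children : D -> {set D}).

Hypothesis children_sub :
  forall c, c \in C -> 0 < level c -> children c \subset Clev level C (level c).-1.
Hypothesis layer_rep :
  forall d, represented level C d -> layer (rep d) = level d.
Hypothesis rep_inj : {in represented level C &, injective rep}.

Lemma represented_mem [d] : d \in C -> represented level C d.
Proof. by rewrite /represented => ->; case: (level d). Qed.

Lemma weight_repE u d : d \in C -> 0 < level d ->
  weight level rep C children u (rep d) = (u \in rep @: children d).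
Proof.
move=> dC d_pos; rewrite /weight; case: ifP => [|/negbT/exists_inP no_edge].
- case/exists_inP=> c cC /andP[/andP[c_pos /eqP eq_rep] /exists_inP[c' c'c /eqP ->]].
  by rewrite (rep_inj _ _ (represented_mem dC) (represented_mem cC) eq_rep) imset_f.
- case: imsetP => // -[c' c'd eq_u]; case: no_edge.
  by exists d; rewrite // d_pos eqxx; apply/exists_inP; exists c'; rewrite // eq_u.
Qed.

Lemma input_rep_le_card (R : numDomainType) (tau : R) B t d (X : {set D}) (P : pred N) :
    d \in C -> 0 < level d ->
    {in children d, forall c', fires level layer rep C children tau B t (rep c') -> c' \in X} ->
  \sum_(u | P u) weight level rep C children u (rep d)
                   * fires level layer rep C children tau B t u
    <= #|children d :&: X|.
Proof.
move=> dC d_pos firesX.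
apply: leq_trans _ (leq_imset_card rep _).
apply: leq_trans _ (sum_mem_leq_card P _).
apply: leq_sum => u _; rewrite weight_repE //.
case: imsetP => [[c' c'd ->]|]; last by rewrite mul0n.
case: (fires _ _ _ _ _ _ _ _ _) (firesX c' c'd) => // /(_ isT) c'X.
by rewrite imset_f // inE c'd c'X.
Qed.

Variables (R : numDomainType) (k : nat) (r : R) (B : {set D}).
Hypothesis B_sub : B \subset Clev level C 0.

Lemma fires_rep_Bset l d : d \in C -> level d = l ->
  fires level layer rep C children (r * k%:R) B l (rep d) ->
  d \in Bset level C children k r B l.
Proof.
elim: l d => [|l IHl] d dC d_lev /=.
  case/andP=> _ /exists_inP[b bB /eqP eq_rep].
  have bC0 : b \in Clev level C 0 := subsetP B_sub b bB.
  have bC : b \in C by move: bC0; rewrite inE => /andP[].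
  by rewrite (rep_inj _ _ (represented_mem dC) (represented_mem bC) eq_rep) inE bB.
case/andP=> _; rewrite layer_rep ?represented_mem // d_lev /= => reach.
rewrite !inE dC d_lev eqxx /=; apply: le_trans reach _; rewrite ler_nat.
have d_pos : 0 < level d by rewrite d_lev.
apply: input_rep_le_card => // c' /(subsetP (children_sub _ dC d_pos)).
by rewrite !inE d_lev => /andP[c'C /eqP c'_lev]; apply: IHl.
Qed.

End NonFiring.

Theorem theorem6p3 (R : realFieldType) (lmax n k : nat)
  (D : finType) (level : D -> nat) (C : {set D}) (children : D -> {set D})
  (N : finType) (layer : N -> nat) (rep : D -> N) (r1 : R) :
  (0 < lmax)%N -> (0 < n)%N -> (0 < k)%N ->
  is_concept_hierarchy level lmax n k C children ->
  (0 <= r1 <= 1)%R ->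
  network_ok level layer rep C lmax ->
  forall B : {set D}, B \subset Clev level C 0 ->
  forall c, c \in C -> c \notin supp level lmax C children k r1 B ->
  ~~ fires level layer rep C children (r1 * k%:R)%R B (level c) (rep c).
Proof.
move=> _ _ _ [lev_le _ _ children_ok _] _ [_ layer_rep rep_inj] B B_sub c cC.
have children_sub d : d \in C -> 0 < level d ->
    children d \subset Clev level C (level d).-1.
  by move=> dC d_pos; case: (children_ok d dC); rewrite ?d_pos ?lev_le.
apply: contra => fires_c; apply/bigcupP.
exists (Ordinal (n := lmax.+1) (lev_le c)) => //.
exact: fires_rep_Bset fires_c.
Qed.
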